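(* Let $m\in\mathbb N$ and let $(a_{\gamma,\delta})_{|\gamma|+|\delta|=m}$ be a family of complex numbers. If for some $\epsilon_0>0$ it holds that $\hat{\mathcal L}_{\epsilon_0}(\theta)\ne0$ for all $\theta\in\widehat\Lambda_{\epsilon_0}\setminus\{0\}$, then for every $\epsilon>0$ it holds that $\hat{\mathcal L}_\epsilon(\theta)\ne0$ for all $\theta\in\widehat\Lambda_\epsilon\setminus\{0\}$.
   Context: Fix a scaling $\mathfrak s\in\mathbb N^d$; for $\gamma\in\mathbb N_0^d$, $|\gamma|:=\sum_i\mathfrak s_i\gamma_i$. For $\epsilon>0$, $\widehat\Lambda_\epsilon:=\prod_{j=1}^d\mathbb R/(2\pi\epsilon^{-\mathfrak s_j}\mathbb Z)$ (the dual group of $\epsilon^{\mathfrak s_1}\mathbb Z\times\cdots\times\epsilon^{\mathfrak s_d}\mathbb Z$). For $\theta\in\widehat\Lambda_\epsilon$, $\xi^\epsilon_{\theta,j}:=i\epsilon^{-\mathfrak s_j}(1-e^{i\epsilon^{\mathfrak s_j}\theta_j})$, $(\xi^\epsilon_\theta)^\gamma:=\prod_j(\xi^\epsilon_{\theta,j})^{\gamma_j}$, and $\hat{\mathcal L}_\epsilon(\theta):=\sum_{|\gamma|+|\delta|=m}a_{\gamma,\delta}(i\xi^\epsilon_\theta)^\gamma(i\overline{\xi^\epsilon_\theta})^\delta$. *)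

From HB Require Import structures.
From mathcomp Require Import all_boot all_order all_algebra.
From mathcomp Require Import all_classical all_reals all_analysis.
From mathcomp Require Import complex.
Set Implicit Arguments. Unset Strict Implicit. Unset Printing Implicit Defensive.
Import Order.TTheory GRing.Theory Num.Theory.
Local Open Scope ring_scope.
Local Open Scope complex_scope.

Section Symbol.
Variables (R : realType) (d : nat) (s : 'I_d -> nat).

Definition expi (x : R) : R[i] := (cos x +i* sin x).

Definition mweight (g : 'I_d -> nat) : nat := (\sum_(i < d) s i * g i)%N.

(* theta represents 0 in the dual torus  prod_j R / (2 pi eps^{-s_j} Z) *)
Definition torus_zero (eps : R) (theta : 'I_d -> R) : Prop :=
  forall j : 'I_d, exists k : int, theta j = 2 * pi * eps ^- s j * k%:~R.

Definition xi (eps : R) (theta : 'I_d -> R) (j : 'I_d) : R[i] :=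
  'i * (eps ^- s j)%:C * (1 - expi (eps ^+ s j * theta j)).

(* hat L_eps(theta) = sum_{|g|+|h|=m} a_{g,h} (i xi)^g (i conj xi)^h.
   Multi-indices with |g|+|h| = m have entries <= m (as s_j >= 1), so
   they are enumerated as finite functions 'I_d -> 'I_m.+1. *)
Definition Lhat (m : nat) (a : ('I_d -> nat) -> ('I_d -> nat) -> R[i])
    (eps : R) (theta : 'I_d -> R) : R[i] :=
  \sum_(g : {ffun 'I_d -> 'I_m.+1})
   \sum_(h : {ffun 'I_d -> 'I_m.+1})
    if (mweight (fun i => nat_of_ord (g i)) + mweight (fun i => nat_of_ord (h i)) == m)%N
    then a (fun i => nat_of_ord (g i)) (fun i => nat_of_ord (h i))
         * (\prod_(j < d) ('i * xi eps theta j) ^+ g j)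
         * (\prod_(j < d) ('i * (xi eps theta j)^*) ^+ h j)
    else 0.
End Symbol.

From HB Require Import structures.
From mathcomp Require Import all_boot all_order all_algebra.
From mathcomp Require Import all_classical all_reals all_analysis.
From mathcomp Require Import complex.
From mathcomp Require Import ring.
Set Implicit Arguments. Unset Strict Implicit. Unset Printing Implicit Defensive.
Import Order.TTheory GRing.Theory Num.Theory.
Local Open Scope ring_scope.

(* The symbol is weighted-homogeneous of degree m.  For t = eps0 / eps, the
   substitution theta_j |-> t^(-s_j) theta_j carries the dual torus of scale
   eps onto that of scale eps0, fixes the origin, and multiplies each
   xi_j by the real factor t^(s_j); since every monomial of the symbol has
   weight |gamma| + |delta| = m, the symbol gets multiplied by t^m != 0. *)

Lemma prod_expr_weighted (K : comPzRingType) (d : nat) (s : 'I_d -> nat)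
    (c : K) (x : 'I_d -> K) (g : 'I_d -> nat) :
  \prod_(j < d) (c ^+ s j * x j) ^+ g j =
  c ^+ mweight s g * \prod_(j < d) x j ^+ g j.
Proof.
rewrite /mweight -prodrXr -big_split; apply: eq_bigr => j _.
by rewrite exprMn exprM.
Qed.

Section Rescaling.
Variables (R : realType) (d : nat) (s : 'I_d -> nat).

Definition torus_rescale (t : R) (theta : 'I_d -> R) : 'I_d -> R :=
  fun j => t ^- s j * theta j.

Variables (eps eps0 : R).
Hypotheses (eps_neq0 : eps != 0) (eps0_neq0 : eps0 != 0).

Let t := eps0 / eps.

Lemma xi_rescale (theta : 'I_d -> R) (j : 'I_d) :
  xi s eps theta j = t%:C%C ^+ s j * xi s eps0 (torus_rescale t theta) j.
Proof.
rewrite /xi.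
have -> : eps0 ^+ s j * torus_rescale t theta j = eps ^+ s j * theta j.
  by rewrite /torus_rescale /t expr_div_n; field; rewrite !expf_neq0 //.
have -> : eps ^- s j = t ^+ s j * eps0 ^- s j.
  by rewrite /t expr_div_n; field; rewrite !expf_neq0 //.
rewrite -rmorphXn rmorphM /=; ring.
Qed.

Lemma Lhat_rescale (m : nat) (a : ('I_d -> nat) -> ('I_d -> nat) -> R[i])
    (theta : 'I_d -> R) :
  Lhat s m a eps theta = t%:C%C ^+ m * Lhat s m a eps0 (torus_rescale t theta).
Proof.
rewrite /Lhat mulr_sumr; apply: eq_bigr => g _.
rewrite mulr_sumr; apply: eq_bigr => h _.
case: eqP => [weight_m|_]; last by rewrite mulr0.
set theta' := torus_rescale t theta.
have xi_i j :
    'i%C * xi s eps theta j = t%:C%C ^+ s j * ('i%C * xi s eps0 theta' j).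
  by rewrite xi_rescale mulrCA.
have xic_i j : 'i%C * (xi s eps theta j)^*%C =
    t%:C%C ^+ s j * ('i%C * (xi s eps0 theta' j)^*%C).
  by rewrite xi_rescale rmorphM rmorphXn mulrCA; congr (_ ^+ _ * _); exact: conjc_real.
rewrite (eq_bigr _ (fun j _ => congr1 (fun z => z ^+ _) (xi_i j))).
rewrite (eq_bigr _ (fun j _ => congr1 (fun z => z ^+ _) (xic_i j))).
have -> : t%:C%C ^+ m = t%:C%C ^+ mweight s (fun j => nat_of_ord (g j)) *
                        t%:C%C ^+ mweight s (fun j => nat_of_ord (h j)).
  by rewrite -exprD weight_m.
rewrite !prod_expr_weighted; ring.
Qed.

Lemma torus_zero_rescale (theta : 'I_d -> R) :
  torus_zero s eps0 (torus_rescale t theta) -> torus_zero s eps theta.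
Proof.
move=> zero' j; have [k theta'_j] := zero' j; exists k.
have -> : theta j = t ^+ s j * torus_rescale t theta j.
  by rewrite /torus_rescale /t expr_div_n; field; rewrite !expf_neq0 //.
by rewrite theta'_j /t expr_div_n; field; rewrite !expf_neq0 //.
Qed.

End Rescaling.

Theorem lemma3p9 (R : realType) (d : nat) (s : 'I_d -> nat)
    (hs : forall j, (0 < s j)%N) (m : nat) (hm : (0 < m)%N)
    (a : ('I_d -> nat) -> ('I_d -> nat) -> R[i]) :
  (exists eps0 : R, 0 < eps0 /\
     forall theta : 'I_d -> R, ~ torus_zero s eps0 theta ->
       Lhat s m a eps0 theta != 0) ->
  forall eps : R, 0 < eps ->
    forall theta : 'I_d -> R, ~ torus_zero s eps theta ->
      Lhat s m a eps theta != 0.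
Proof.
move=> [eps0 [eps0_gt0 Lhat0_neq0]] eps eps_gt0 theta nonzero_theta.
have eps_neq0 : eps != 0 by rewrite gt_eqF.
have eps0_neq0 : eps0 != 0 by rewrite gt_eqF.
rewrite (Lhat_rescale s eps_neq0 eps0_neq0) mulf_neq0 //.
  by rewrite expf_neq0 // eq_complex /= eqxx andbT mulf_neq0 ?invr_eq0.
apply: Lhat0_neq0 => zero'; apply: nonzero_theta.
exact: torus_zero_rescale zero'.
Qed.
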